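(* Let $G$ be a graph and $k\ge 1$ an integer. Then $\mathrm{diam}(G)\le 2k+1$ if and only if every $k$-packing of $G$ is a general position set of $G$.
   Context: All graphs are finite, simple and connected; $\mathrm{diam}(G)$ is the maximum distance between two vertices of $G$. A set $S$ of vertices is a $k$-packing if $d(u,v)>k$ for all distinct $u,v\in S$. A set $S$ of vertices is a general position set if no three vertices of $S$ lie on a common geodesic (shortest path) of $G$. *)

From mathcomp Require Import all_boot.
Set Implicit Arguments. Unset Strict Implicit. Unset Printing Implicit Defensive.

Section Graphs.
Variable T : finType.
Variable e : rel T.

Definition simple_graph := symmetric e /\ irreflexive e.
Definition connected_graph := forall u v : T, connect e u v.

(* A walk from u to v: the vertex sequence u :: p; its length is size p. *)
Definition walk (u v : T) (p : seq T) : bool := path e u p && (last u p == v).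

(* Distance: the least n such that a walk of length n from u to v exists
   (searched among n < #|T|; for connected graphs this is the true distance). *)
Definition dist (u v : T) : nat :=
  find (fun n => [exists p : n.-tuple T, walk u v p]) (iota 0 #|T|).

Definition diam : nat := \max_(u : T) \max_(v : T) dist u v.

Definition packing (k : nat) (S : {set T}) : Prop :=
  forall u v, u \in S -> v \in S -> u != v -> k < dist u v.

Definition geodesic (u v : T) (p : seq T) : Prop := walk u v p /\ size p = dist u v.

Definition gp_set (S : {set T}) : Prop :=
  ~ exists x y z u v (p : seq T),
      [/\ x \in S, y \in S, z \in S & [/\ x != y, y != z & x != z]] /\
      geodesic u v p /\ [/\ x \in u :: p, y \in u :: p & z \in u :: p].
End Graphs.

From mathcomp Require Import all_boot zify.

(* Along a geodesic the distance between two of its vertices is the difference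
   of their positions. Hence three vertices of a k-packing on a geodesic would
   span a subgeodesic of length at least 2(k + 1) > diam. Conversely, if some
   geodesic has length at least 2k + 2, its vertices at positions 0, k + 1 and
   2k + 2 form a k-packing that is not in general position. *)

Lemma last_take (T : Type) (a : T) p i :
  i <= size p -> last a (take i p) = nth a (a :: p) i.
Proof.
elim: p a i => [|c p IHp] a [|i] //= i_le.
by rewrite IHp // (set_nth_default c a) /= ?ltnS.
Qed.

Lemma uniq_triple_sorted [P : pred nat] [s : seq nat] :
  uniq s -> size s = 3 -> all P s -> exists i j l, [/\ i < j < l, P i, P j & P l].
Proof.
move=> s_uniq s_size; rewrite -(perm_all _ (permEl (perm_sort leq s))).
have : sorted ltn (sort leq s).
  by rewrite ltn_sorted_uniq_leq sort_uniq s_uniq sort_sorted //; exact: leq_total.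
move: (size_sort leq s); rewrite s_size.
case: (sort leq s) => [|i [|j [|l []]]] //= _ /and3P [ij jl _] /and4P [Pi Pj Pl _].
by exists i, j, l; rewrite ij jl.
Qed.

Section Distance.
Context {T : finType} {e : rel T}.
Implicit Types (a b c : T) (p : seq T).

Lemma dist_le_card a b : dist e a b <= #|T|.
Proof. by rewrite /dist (leq_trans (find_size _ _)) ?size_iota. Qed.

Lemma dist_le_size [a b p] : walk e a b p -> dist e a b <= size p.
Proof.
move=> w; have [p_small|] := ltnP (size p) #|T|; last exact: leq_trans (dist_le_card a b).
rewrite leqNgt; apply/negP => /(before_find 0); rewrite nth_iota // add0n.
by move/negbT/existsPn/(_ (in_tuple p)); rewrite w.
Qed.

Lemma dist_xx a : dist e a a = 0.
Proof. by apply/eqP; rewrite -leqn0 (@dist_le_size a a [::]) // /walk /=. Qed.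

Lemma geodesic_exists [a b] : dist e a b < #|T| -> exists p, geodesic e a b p.
Proof.
rewrite /dist -{2}[#|T|](size_iota 0) -has_find => found.
have := nth_find 0 found; rewrite has_find size_iota in found.
by rewrite nth_iota // add0n => /existsP [p w]; exists p; rewrite /geodesic size_tuple.
Qed.

Lemma connect_dist_lt_card [a b] : connect e a b -> dist e a b < #|T|.
Proof.
case/connectP => p /shortenP [q q_path q_uniq _] ->.
apply: leq_ltn_trans (@dist_le_size _ _ q _) _; first by rewrite /walk q_path /=.
by move/card_uniqP: q_uniq => /= <-; apply: max_card.
Qed.

Lemma walk_cat a b c p q : walk e a b p -> walk e b c q -> walk e a c (p ++ q).
Proof. by rewrite /walk cat_path last_cat => /andP [-> /eqP ->] /andP [-> ->]. Qed.

(* A pair with no walk shorter than #|T| gets the junk distance #|T|, which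
   bounds every [dist]; so the triangle inequality needs no connectivity. *)
Lemma dist_triangle a b c : dist e a c <= dist e a b + dist e b c.
Proof.
have [ab_far|/geodesic_exists [p [wp <-]]] := leqP #|T| (dist e a b).
  exact: leq_trans (dist_le_card a c) (leq_trans ab_far (leq_addr _ _)).
have [bc_far|/geodesic_exists [q [wq <-]]] := leqP #|T| (dist e b c).
  exact: leq_trans (dist_le_card a c) (leq_trans bc_far (leq_addl _ _)).
by rewrite -size_cat; apply: dist_le_size; apply: walk_cat wp wq.
Qed.

Lemma walk_rev a b p : symmetric e -> walk e a b p -> walk e b a (rev (belast a p)).
Proof.
move=> e_sym /andP [pa /eqP <-]; apply/andP; split.
  by rewrite rev_path (eq_path (e' := e)) // => x y /=; rewrite e_sym.
by case/lastP: p {pa} => [|q x] //=; rewrite belast_rcons last_rcons rev_cons last_rcons.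
Qed.

Lemma dist_sym a b : symmetric e -> dist e a b = dist e b a.
Proof.
move=> e_sym; suff dist_le a' b' : dist e a' b' <= dist e b' a'.
  by apply/eqP; rewrite eqn_leq !dist_le.
have [|/geodesic_exists [p [wp <-]]] := leqP #|T| (dist e b' a').
  exact: leq_trans (dist_le_card a' b').
by rewrite -(size_belast b') -size_rev; apply/dist_le_size/walk_rev.
Qed.

Lemma walk_drop i [a b p] : walk e a b p -> walk e (last a (take i p)) b (drop i p).
Proof.
rewrite /walk -{1 2}(cat_take_drop i p) cat_path last_cat.
by case/andP=> /andP [_ ->].
Qed.

Lemma dist_nth_le [a b p] i j : walk e a b p -> i <= j -> j <= size p ->
  dist e (nth a (a :: p) i) (nth a (a :: p) j) <= j - i.
Proof.
move=> w ij jp; have ip := leq_trans ij jp.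
set q := take (j - i) (drop i p).
have wq : walk e (nth a (a :: p) i) (nth a (a :: p) j) q.
  rewrite /walk take_path; last by rewrite -last_take //; case/andP: (walk_drop i w).
  by rewrite -!last_take // -last_cat -takeD subnKC // eqxx.
by apply: leq_trans (dist_le_size wq) _; rewrite size_take; case: ltnP.
Qed.

Lemma geodesic_dist_nth [a b p] i j : geodesic e a b p -> i <= j -> j <= size p ->
  dist e (nth a (a :: p) i) (nth a (a :: p) j) = j - i.
Proof.
move=> [w size_p] ij jp; have ip := leq_trans ij jp; have /andP [_ /eqP p_end] := w.
have a_i := dist_nth_le 0 i w (leq0n i) ip; rewrite subn0 /= in a_i.
have j_b := dist_nth_le j (size p) w jp (leqnn _).
rewrite -last_nth p_end in j_b.
have i_j := dist_nth_le i j w ij jp.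
have := dist_triangle a (nth a (a :: p) i) b.
have := dist_triangle (nth a (a :: p) i) (nth a (a :: p) j) b.
lia.
Qed.

Lemma geodesic_nth_neq [a b p] i j : geodesic e a b p -> i < j -> j <= size p ->
  nth a (a :: p) i != nth a (a :: p) j.
Proof.
move=> g ij jp; apply/eqP => same.
by have := geodesic_dist_nth i j g (ltnW ij) jp; rewrite same dist_xx; lia.
Qed.

Lemma dist_le_diam a b : dist e a b <= diam e.
Proof. by apply: leq_trans (leq_bigmax b) (leq_bigmax (F := fun u => \max_v dist e u v) a). Qed.

Lemma packing_not_three_on_geodesic [k] [S : {set T}] [a b p i j l] :
  diam e <= 2 * k + 1 -> packing e k S -> geodesic e a b p ->
  i < j -> j < l -> l <= size p ->
  ~~ [&& nth a (a :: p) i \in S, nth a (a :: p) j \in S & nth a (a :: p) l \in S].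
Proof.
move=> small_diam pk g ij jl lp; apply/and3P => -[iS jS lS].
have jp : j <= size p := ltnW (leq_trans jl lp).
have := pk _ _ iS jS (geodesic_nth_neq i j g ij jp).
have := pk _ _ jS lS (geodesic_nth_neq j l g jl lp).
have := dist_le_diam (nth a (a :: p) i) (nth a (a :: p) l).
rewrite (geodesic_dist_nth i j g (ltnW ij) jp) (geodesic_dist_nth j l g (ltnW jl) lp).
by rewrite (geodesic_dist_nth i l g (ltnW (ltn_trans ij jl)) lp); lia.
Qed.

Lemma packing_gp_set k (S : {set T}) :
  diam e <= 2 * k + 1 -> packing e k S -> gp_set e S.
Proof.
move=> small_diam pk [x [y [z [a [b [p [[xS yS zS [xy yz xz]] [g [xp yp zp]]]]]]]]].
set idx := [seq index v (a :: p) | v <- [:: x; y; z]].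
have idx_uniq : uniq idx.
  rewrite map_inj_in_uniq /= ?inE ?negb_or ?xy ?yz ?xz //.
  by apply: sub_in2 (@index_inj _ a (a :: p)) => v; rewrite !inE => /or3P [] /eqP ->.
have idx_ok : all (fun n => (n <= size p) && (nth a (a :: p) n \in S)) idx.
  have index_le v : v \in a :: p -> index v (a :: p) <= size p.
    by move=> vp; change (index v (a :: p) < size (a :: p)); rewrite index_mem.
  by rewrite /= !index_le ?xp ?yp ?zp // !nth_index // xS yS zS.
have [i [j [l [/andP [ij jl] /andP [_ iS] /andP [_ jS] /andP [lp lS]]]]] :=
  uniq_triple_sorted idx_uniq (erefl _) idx_ok.
by move: (packing_not_three_on_geodesic small_diam pk g ij jl lp); rewrite iS jS lS.
Qed.

Lemma long_geodesic_packing_not_gp k a b q :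
  symmetric e -> geodesic e a b q -> 2 * k + 2 <= size q ->
  exists2 S : {set T}, packing e k S & ~ gp_set e S.
Proof.
move=> e_sym g long_q.
pose x := nth a (a :: q) 0; pose y := nth a (a :: q) k.+1; pose z := nth a (a :: q) (2 * k + 2).
have dist_at i j : i <= j -> j <= 2 * k + 2 -> dist e (nth a (a :: q) i) (nth a (a :: q) j) = j - i.
  by move=> ij j_le; apply: geodesic_dist_nth i j g ij (leq_trans j_le long_q).
have xy : dist e x y = k.+1 by rewrite dist_at //; lia.
have yz : dist e y z = k.+1 by rewrite dist_at; lia.
have xz : dist e x z = 2 * k + 2 by rewrite dist_at //; lia.
have yx : dist e y x = k.+1 by rewrite dist_sym.
have zy : dist e z y = k.+1 by rewrite dist_sym.
have zx : dist e z x = 2 * k + 2 by rewrite dist_sym.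
have pk : packing e k [set x; y; z].
  move=> u v; rewrite !inE => /orP [/orP [] | ] /eqP -> /orP [/orP [] | ] /eqP ->;
  by rewrite ?eqxx // ?xy ?yz ?xz ?yx ?zy ?zx => _; lia.
exists [set x; y; z] => //.
have [x_y y_z x_z] : [/\ x != y, y != z & x != z].
  by split; apply: (geodesic_nth_neq _ _ g); lia.
move=> []; exists x, y, z, a, b, q; split; first by rewrite !inE !eqxx ?orbT.
by split=> //; split; apply: mem_nth; rewrite /= ltnS; lia.
Qed.

End Distance.

Theorem proposition4p1 (T : finType) (e : rel T) (k : nat) :
  simple_graph e -> connected_graph e -> 1 <= k ->
  (diam e <= 2 * k + 1 <-> forall S : {set T}, packing e k S -> gp_set e S).
Proof.
move=> [e_sym _] e_conn _; split=> [small_diam S|all_gp]; first exact: packing_gp_set.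
apply/bigmax_leqP => a _; apply/bigmax_leqP => b _; rewrite leqNgt; apply/negP => far.
have [q [wq size_q]] := geodesic_exists (connect_dist_lt_card (e_conn a b)).
have long_q : 2 * k + 2 <= size q by rewrite size_q; lia.
have [S pk not_gp] := long_geodesic_packing_not_gp k a b q e_sym (conj wq size_q) long_q.
exact: not_gp (all_gp S pk).
Qed.
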